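(* Let $n,l\in\mathbb N$, $1<u\le2$ with $\frac1u+\frac1{u'}=1$, and $s>\frac{ln}u$. Let $B$ be a proper subset of $J_l=\{1,\dots,l\}$, with $\#B$ its number of elements. For $l_0\in J_l\setminus B$ define $$S_B^{l_0}(s)=\Big\{(x_1,\dots,x_l)\in R_B:\ \frac sn>\frac{\#B+1}{u}+\sum_{i\in J_l\setminus(B\cup\{l_0\})}x_i\Big\}.$$ Then the convex hull of $\bigcup_{l_0\in J_l\setminus B}S_B^{l_0}(s)$ equals $S_B(s)$.
   Context: $R_B=\{(x_1,\dots,x_l)\in(0,1)^l: 0<x_i\le\frac1u \text{ for } i\in B,\ \frac1u<x_i<1\text{ for } i\notin B\}$ and $S_B(s)=\{(x_1,\dots,x_l)\in R_B:\ \sum_{i\in J_l}x_i-\frac1{u'}<\frac sn+\sum_{i\in B}(x_i-\frac1u)\}$. *)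

From mathcomp Require Import all_boot all_order all_algebra.
From mathcomp Require Import reals.
Set Implicit Arguments. Unset Strict Implicit. Unset Printing Implicit Defensive.
Import Order.TTheory GRing.Theory Num.Theory.
Local Open Scope ring_scope.

(* Points of R^l are row vectors 'rV[R]_l; coordinate i (i : 'I_l, i.e. the
   index i+1 of J_l = {1,..,l}) of x is x ord0 i. *)

Definition conv_hull (R : realType) (l : nat) (A : 'rV[R]_l -> Prop) :
    'rV[R]_l -> Prop :=
  fun x => exists (k : nat) (w : 'I_k -> R) (p : 'I_k -> 'rV[R]_l),
    [/\ forall j, 0 <= w j, \sum_(j < k) w j = 1, forall j, A (p j)
      & x = \sum_(j < k) w j *: p j].

Definition R_B (R : realType) (l : nat) (u : R) (B : {set 'I_l})
    (x : 'rV[R]_l) : Prop :=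
  forall i : 'I_l, [/\ 0 < x ord0 i, x ord0 i < 1,
    i \in B -> x ord0 i <= u^-1 & i \notin B -> u^-1 < x ord0 i].

Definition S_B (R : realType) (n l : nat) (u u' s : R) (B : {set 'I_l})
    (x : 'rV[R]_l) : Prop :=
  R_B u B x /\
  \sum_(i < l) x ord0 i - u'^-1 < s / n%:R + \sum_(i in B) (x ord0 i - u^-1).

Definition S_B_l0 (R : realType) (n l : nat) (u s : R) (B : {set 'I_l})
    (l0 : 'I_l) (x : 'rV[R]_l) : Prop :=
  R_B u B x /\
  s / n%:R > (#|B|.+1)%:R / u + \sum_(i < l | (i \notin B) && (i != l0)) x ord0 i.

From mathcomp Require Import all_boot all_order all_algebra.
From mathcomp Require Import reals ring lra.
Set Implicit Arguments. Unset Strict Implicit. Unset Printing Implicit Defensive.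
Import Order.TTheory GRing.Theory Num.Theory.
Local Open Scope ring_scope.

(* Write a := 1/u and E(y) := sum_(i notin B) (y_i - a).  Inside R_B both sets are cut
   out by one linear inequality: y is in S_B iff E(y) < e + 1 - a, and y is in
   S_B^{l0}(s) iff E(y) - (y_l0 - a) < e, where e := s/n - l/u > 0.  Since y_l0 < 1,
   every S_B^{l0}(s) lies in the convex set S_B.
   Conversely, let x in S_B lie in no S_B^{j}(s) and put D := E(x).  Then x is the
   convex combination, with weights (x_j - a)/D, of the points v_j that agree with x
   on B and equal a off B except at j, where they carry the whole excess D.  Pulling
   each v_j towards x, to z_j := rho_j x + (1 - rho_j) v_j with
   rho_j (D - (x_j - a)) = r for a fixed r in (max(0, D - (1 - a)), e), lands z_j in
   S_B^{j}(s), and points pulled towards their barycentre still have it in their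
   convex hull. *)

Section ConvexCombinations.
Variables (R : realFieldType) (k : nat) (w : 'I_k -> R).
Hypotheses (w_ge0 : forall j, 0 <= w j) (w_sum1 : \sum_(j < k) w j = 1).

Lemma convex_weight_gt0 : exists j, 0 < w j.
Proof.
have : \sum_(j < k) w j <> 0 by rewrite w_sum1 => /eqP; rewrite oner_eq0.
by move/(psumr_neq0P (fun j _ => w_ge0 j)) => [j /andP[_ wj]]; exists j.
Qed.

Lemma convex_sum_const (c : R) : \sum_(j < k) w j * c = c.
Proof. by rewrite -mulr_suml w_sum1 mul1r. Qed.

Lemma ler_convex_sum (f g : 'I_k -> R) :
  (forall j, f j <= g j) -> \sum_(j < k) w j * f j <= \sum_(j < k) w j * g j.
Proof. by move=> fg; apply: ler_sum => j _; rewrite ler_wpM2l. Qed.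

Lemma ltr_convex_sum (f g : 'I_k -> R) :
  (forall j, f j < g j) -> \sum_(j < k) w j * f j < \sum_(j < k) w j * g j.
Proof.
move=> fg; have [j wj] := convex_weight_gt0.
rewrite (bigD1 j) // [ltRHS](bigD1 j) //=.
apply: ltr_leD; first by rewrite ltr_pM2l.
by apply: ler_sum => i _; rewrite ler_wpM2l // ltW.
Qed.

End ConvexCombinations.

Lemma sum_shrink_toward (R : fieldType) (V : lmodType R) (k : nat)
    (lam rho : 'I_k -> R) (v : 'I_k -> V) :
  \sum_(j < k) lam j = 1 -> (forall j, rho j != 1) ->
  let y := \sum_(j < k) lam j *: v j in
  \sum_(j < k) (lam j / (1 - rho j)) *: (rho j *: y + (1 - rho j) *: v j)
    = (\sum_(j < k) lam j / (1 - rho j)) *: y.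
Proof.
move=> lam_sum1 rho_neq1 y.
have rho_sub_neq0 j : 1 - rho j != 0 by rewrite subr_eq0 eq_sym.
under eq_bigr => j _ do rewrite scalerDr !scalerA divfK //.
rewrite big_split /= -/y -scaler_suml.
have lam_rho j : lam j / (1 - rho j) * rho j = lam j / (1 - rho j) - lam j.
  by field.
by rewrite (eq_bigr _ (fun j _ => lam_rho j)) sumrB lam_sum1 scalerBl scale1r subrK.
Qed.

Lemma exists_between (R : realFieldType) (a b c : R) :
  a < c -> b < c -> exists r, [/\ a < r, b < r & r < c].
Proof.
move=> ac bc; have max_lt : Num.max a b < c by rewrite gt_max ac bc.
have [] := midf_lt max_lt; rewrite gt_max => /andP[a_lt b_lt] lt_c.
by exists ((Num.max a b + c) / 2).
Qed.

Section ConvexHull.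
Variables (R : realType) (l : nat) (A : 'rV[R]_l -> Prop).

Lemma conv_hull_sub x : A x -> conv_hull A x.
Proof.
move=> Ax; exists 1%N, (fun=> 1), (fun=> x).
by split; rewrite ?big_ord1 ?scale1r.
Qed.

Lemma conv_hull_mono (A' : 'rV[R]_l -> Prop) x :
  (forall y, A y -> A' y) -> conv_hull A x -> conv_hull A' x.
Proof.
move=> AA' [k [w [p [w_ge0 w_sum1 Ap ->]]]].
by exists k, w, p; split => // j; apply: AA'.
Qed.

Lemma conv_hull_supported k (w : 'I_k -> R) (p : 'I_k -> 'rV[R]_l) :
  (forall j, 0 <= w j) -> \sum_(j < k) w j = 1 ->
  (forall j, w j != 0 -> A (p j)) ->
  conv_hull A (\sum_(j < k) w j *: p j).
Proof.
move=> w_ge0 w_sum1 Ap.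
have [j0 /lt0r_neq0 wj0] := convex_weight_gt0 w_ge0 w_sum1.
exists k, w, (fun j => if w j == 0 then p j0 else p j); split => // [j|].
  by case: eqP => [_|/eqP]; apply: Ap.
by apply: eq_bigr => j _; case: eqP => // ->; rewrite !scale0r.
Qed.

Lemma conv_hull_shrink k (lam rho : 'I_k -> R) (v : 'I_k -> 'rV[R]_l) :
  (forall j, 0 <= lam j) -> \sum_(j < k) lam j = 1 ->
  (forall j, 0 <= rho j < 1) ->
  let y := \sum_(j < k) lam j *: v j in
  (forall j, lam j != 0 -> A (rho j *: y + (1 - rho j) *: v j)) ->
  conv_hull A y.
Proof.
move=> lam_ge0 lam_sum1 rho01 y Az.
have rho_lt1 j : rho j < 1 by case/andP: (rho01 j).
pose K := \sum_(j < k) lam j / (1 - rho j).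
have lam_le j : lam j <= lam j / (1 - rho j).
  have := rho01 j; have := lam_ge0 j.
  by rewrite ler_pdivlMr ?subr_gt0 //; nra.
have K_gt0 : 0 < K.
  by apply: lt_le_trans (ler_sum _ (fun j _ => lam_le j)); rewrite lam_sum1.
have -> : y = \sum_(j < k) (lam j / (1 - rho j) / K) *: (rho j *: y + (1 - rho j) *: v j).
  under eq_bigr => j _ do rewrite mulrC -scalerA.
  rewrite -scaler_sumr sum_shrink_toward // => [|j]; last by rewrite lt_eqF.
  by rewrite -/y -/K scalerA mulVf ?scale1r // gt_eqF.
apply: conv_hull_supported => [j||j].
- by apply: divr_ge0 (ltW K_gt0); apply: le_trans (lam_le j).
- by rewrite -mulr_suml divff // gt_eqF.
- by move=> mu_neq0; apply: Az; apply: contraNN mu_neq0 => /eqP->; rewrite !mul0r.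
Qed.

End ConvexHull.

Section Reformulation.
Variables (R : realType) (n l : nat) (u s : R) (B : {set 'I_l}).

Definition excess (x : 'rV[R]_l) : R :=
  \sum_(i < l | i \notin B) (x ord0 i - u^-1).

Definition slack : R := s / n%:R - l%:R / u.

Lemma slack_gt0 : (0 < n)%N -> 0 < u -> (l * n)%:R / u < s -> 0 < slack.
Proof.
move=> n_gt0 u_gt0 hs; rewrite subr_gt0 ltr_pdivlMr ?ltr0n //.
by rewrite mulrAC -natrM.
Qed.

Lemma sum_notin_const (c : R) : \sum_(i < l | i \notin B) c = #|~: B|%:R * c.
Proof.
by rewrite sumr_const mulr_natl; congr (_ *+ _); apply: eq_card => i; rewrite inE.
Qed.

Lemma card_ord_split : l%:R = #|B|%:R + #|~: B|%:R :> R.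
Proof. by rewrite -natrD cardsC card_ord. Qed.

Lemma excessE x : excess x = \sum_(i < l | i \notin B) x ord0 i - #|~: B|%:R * u^-1.
Proof. by rewrite /excess sumrB sum_notin_const. Qed.

Lemma S_BE u' x : u^-1 + u'^-1 = 1 ->
  S_B n u u' s B x <-> R_B u B x /\ excess x < slack + (1 - u^-1).
Proof.
move=> hu'; rewrite /S_B excessE /slack (bigID (mem B)) /= sumrB sumr_const.
rewrite card_ord_split mulrDl -mulr_natl; split=> -[Rx hx]; split => //; lra.
Qed.

Lemma S_B_l0E j x : j \notin B ->
  S_B_l0 n u s B j x <-> R_B u B x /\ excess x - (x ord0 j - u^-1) < slack.
Proof.
move=> jB; rewrite /S_B_l0 excessE /slack.
have -> : \sum_(i < l | (i \notin B) && (i != j)) x ord0 i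
         = \sum_(i < l | i \notin B) x ord0 i - x ord0 j.
  by rewrite [in RHS](bigD1 j) //= addrAC subrr add0r.
rewrite card_ord_split mulrDl.
have -> : (#|B|.+1)%:R / u = #|B|%:R * u^-1 + u^-1 by rewrite -addn1 natrD mulrDl mul1r.
by split=> -[Rx hx]; split => //; lra.
Qed.

Lemma R_B_convex k (w : 'I_k -> R) (p : 'I_k -> 'rV[R]_l) :
  (forall j, 0 <= w j) -> \sum_(j < k) w j = 1 ->
  (forall j, R_B u B (p j)) -> R_B u B (\sum_(j < k) w j *: p j).
Proof.
move=> w_ge0 w_sum1 Rp i.
have coordE : (\sum_(j < k) w j *: p j) ord0 i = \sum_(j < k) w j * p j ord0 i.
  by rewrite summxE; apply: eq_bigr => j _; rewrite mxE.
rewrite coordE; split => [||iB|iB].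
- rewrite -[ltLHS](convex_sum_const w_sum1); apply: ltr_convex_sum => // j.
  by case: (Rp j i).
- rewrite -[ltRHS](convex_sum_const w_sum1); apply: ltr_convex_sum => // j.
  by case: (Rp j i).
- rewrite -[leRHS](convex_sum_const w_sum1); apply: ler_convex_sum => // j.
  by case: (Rp j i) => _ _ /(_ iB).
- rewrite -[ltLHS](convex_sum_const w_sum1); apply: ltr_convex_sum => // j.
  by case: (Rp j i) => _ _ _ /(_ iB).
Qed.

Lemma excess_convex k (w : 'I_k -> R) (p : 'I_k -> 'rV[R]_l) :
  \sum_(j < k) w j = 1 ->
  excess (\sum_(j < k) w j *: p j) = \sum_(j < k) w j * excess (p j).
Proof.
move=> w_sum1; rewrite /excess [RHS](eq_bigr _ (fun j _ => mulr_sumr _ _ _ _)).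
rewrite exchange_big; apply: eq_bigr => i _ /=.
rewrite summxE -[in LHS](convex_sum_const w_sum1 u^-1) -sumrB.
by apply: eq_bigr => j _; rewrite mxE mulrBr.
Qed.

Lemma conv_hull_S_B_l0 x :
  conv_hull (fun y => exists l0, l0 \notin B /\ S_B_l0 n u s B l0 y) x ->
  R_B u B x /\ excess x < slack + (1 - u^-1).
Proof.
move=> [k [w [p [w_ge0 w_sum1 Sp ->]]]].
have Rp j : R_B u B (p j) by have [l0 [l0B /(S_B_l0E _ l0B) []]] := Sp j.
split; first exact: R_B_convex.
rewrite excess_convex // -[ltRHS](convex_sum_const w_sum1).
apply: ltr_convex_sum => // j; have [l0 [l0B /(S_B_l0E _ l0B) [_ gap]]] := Sp j.
by case: (Rp j l0) => _ p_lt1 _ _; lra.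
Qed.

End Reformulation.

Section Decomposition.
Variables (R : realType) (l : nat) (u : R) (B : {set 'I_l}).
Variables (x : 'rV[R]_l) (j0 : 'I_l) (e r : R).

Local Notation D := (excess u B x).
Local Notation d j := (x ord0 j - u^-1).

(* [lra] does not use section hypotheses: the proofs push the ones they need. *)
Hypotheses (u_gt0 : 0 < u) (Rx : R_B u B x) (j0B : j0 \notin B).
Hypothesis gap_ge : forall j, j \notin B -> e <= D - d j.
Hypotheses (r_gt0 : 0 < r) (r_gt : D - (1 - u^-1) < r) (r_lt : r < e).

Lemma excess_gt_gap : e < D.
Proof. by have := gap_ge j0B; case: (Rx j0) => _ _ _ /(_ j0B); lra. Qed.

Lemma r_lt_gap j : r < D - d j.
Proof.
have := excess_gt_gap; have := r_lt.
case: (boolP (j \in B)) => [jB|/gap_ge]; last by lra.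
by case: (Rx j) => _ _ /(_ jB); lra.
Qed.

Let rho j := r / (D - d j).

Lemma rho_gap j : rho j * (D - d j) = r.
Proof. by rewrite /rho divfK // gt_eqF // (lt_trans r_gt0 (r_lt_gap j)). Qed.

Lemma rho_bounds j : 0 < rho j < 1.
Proof.
have gap_gt := r_lt_gap j; have r_pos := r_gt0.
have gap_pos : 0 < D - d j by lra.
by rewrite /rho divr_gt0 //= ltr_pdivrMr // mul1r.
Qed.

Lemma excess_gt0 : 0 < D.
Proof. by have := excess_gt_gap; have := r_lt; have := r_gt0; lra. Qed.

Let lam j := if j \notin B then d j / D else 0.

Lemma lam_ge0 j : 0 <= lam j.
Proof.
rewrite /lam; case: ifP => // jB.
by case: (Rx j) => _ _ _ /(_ jB) x_gt; rewrite divr_ge0 ?subr_ge0 ?ltW ?excess_gt0.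
Qed.

Lemma lam_sum1 : \sum_(j < l) lam j = 1.
Proof. by rewrite -big_mkcond /= -mulr_suml divff // gt_eqF // excess_gt0. Qed.

Let v j := \row_(i < l) (if i \in B then x ord0 i else u^-1 + (i == j)%:R * D).

Lemma x_convex_comb : x = \sum_(j < l) lam j *: v j.
Proof.
apply/rowP => i; rewrite summxE.
under eq_bigr => j _ do rewrite !mxE.
case iB: (i \in B) => /=.
  by rewrite -mulr_suml lam_sum1 mul1r.
under eq_bigr => j _ do rewrite mulrDr mulrA.
rewrite big_split /= -mulr_suml lam_sum1 mul1r -mulr_suml (bigD1 i) //= big1.
  by rewrite eqxx /lam iB mulr1 addr0 divfK ?subrKC // gt_eqF // excess_gt0.
by move=> j /negbTE; rewrite eq_sym => ->; rewrite mulr0.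
Qed.

Let z j := rho j *: x + (1 - rho j) *: v j.

Lemma z_coord_in j i : i \in B -> z j ord0 i = x ord0 i.
Proof. by move=> iB; rewrite !mxE iB; ring. Qed.

Lemma z_coord_notin j i : i \notin B ->
  z j ord0 i - u^-1 = rho j * d i + (i == j)%:R * ((1 - rho j) * D).
Proof. by move=> /negbTE iB; rewrite !mxE iB; ring. Qed.

Lemma z_coord_self j : j \notin B -> z j ord0 j - u^-1 = D - r.
Proof. by move=> jB; rewrite z_coord_notin // eqxx /= -(rho_gap j); ring. Qed.

Lemma excess_z j : j \notin B -> excess u B (z j) = D.
Proof.
move=> jB; rewrite /excess (eq_bigr _ (fun i => @z_coord_notin j i)).
rewrite big_split /= -mulr_sumr -/(excess u B x) (bigD1 j) //= big1.
  by rewrite eqxx /=; ring.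
by move=> i /andP[_ /negbTE ->]; rewrite mul0r.
Qed.

Lemma R_B_z j : j \notin B -> R_B u B (z j).
Proof.
move=> jB i; case: (boolP (i \in B)) => iB.
  by rewrite z_coord_in //; have := Rx i; rewrite iB.
have a_gt0 : 0 < u^-1 by rewrite invr_gt0.
case: (Rx i) => _ x_lt1 _ /(_ iB) x_gt.
have [->|i_neq_j] := eqVneq i j.
  have := z_coord_self jB; have := r_lt_gap i; have := r_gt.
  by split => // *; lra.
have /andP[rho_gt0 rho_lt1] := rho_bounds j.
have := z_coord_notin j iB; rewrite (negbTE i_neq_j) mul0r addr0.
by split => // *; nra.
Qed.

Lemma conv_hull_below_gap :
  conv_hull (fun y => exists l0, l0 \notin B /\
    R_B u B y /\ excess u B y - (y ord0 l0 - u^-1) < e) x.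
Proof.
rewrite [X in conv_hull _ X]x_convex_comb.
apply: (@conv_hull_shrink _ _ _ _ lam rho v) => [|||j].
- exact: lam_ge0.
- exact: lam_sum1.
- by move=> j; have /andP[/ltW -> ->] := rho_bounds j.
rewrite -x_convex_comb -/(z j) /lam; case: ifP => [jB _|_]; last by rewrite eqxx.
exists j; split => //; split; first exact: R_B_z.
by rewrite excess_z // z_coord_self // subKr.
Qed.

End Decomposition.

Theorem proposition5p3 (R : realType) (n l : nat) (u u' s : R)
    (B : {set 'I_l}) :
  (0 < n)%N ->
  1 < u -> u <= 2 -> u^-1 + u'^-1 = 1 ->
  s > (l * n)%:R / u ->
  B \proper [set: 'I_l] ->
  forall x : 'rV[R]_l,
    conv_hull (fun y => exists l0 : 'I_l, l0 \notin B /\ S_B_l0 n u s B l0 y) x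
    <-> S_B n u u' s B x.
Proof.
move=> n_gt0 u_gt1 _ hu' hs /properP[_ [j0 _ j0B]] x.
have u_gt0 : 0 < u := lt_trans ltr01 u_gt1.
rewrite S_BE //; split; first exact: conv_hull_S_B_l0.
move=> [Rx excess_lt].
have [/existsP[j /andP[jB gap]]|no_gap] :=
  boolP [exists j, (j \notin B) && (excess u B x - (x ord0 j - u^-1) < slack n l u s)].
  by apply: conv_hull_sub; exists j; split => //; apply/S_B_l0E.
have gap_ge j : j \notin B -> slack n l u s <= excess u B x - (x ord0 j - u^-1).
  move=> jB; rewrite leNgt; apply: contra no_gap => gap.
  by apply/existsP; exists j; rewrite jB.
have excess_sub_lt : excess u B x - (1 - u^-1) < slack n l u s by lra.
have [r [r_gt0 r_gt r_lt]] := exists_between (slack_gt0 n_gt0 u_gt0 hs) excess_sub_lt.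
apply: (conv_hull_mono _ (conv_hull_below_gap u_gt0 Rx j0B gap_ge r_gt0 r_gt r_lt)).
by move=> y [l0 [l0B hy]]; exists l0; split => //; apply/S_B_l0E.
Qed.
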